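(* Let $p>3$ be a prime, and set $A_p=\left(\tfrac{p-1}{2}\right)!!\prod_{i,j=1,\ p\nmid 2i+j}^{(p-1)/2}(2i+j)$ and $B_p=\left(\tfrac{p-3}{2}\right)!!\prod_{i,j=1,\ p\nmid 2i-j}^{(p-1)/2}(2i-j)$. Then $A_pB_p\equiv\left(\frac{-2}{p}\right)\pmod p$.
   Context: For a positive integer $n$, $n!!=\prod_{k=0}^{\lfloor(n-1)/2\rfloor}(n-2k)$, and $0!!=1$. $\left(\frac{\cdot}{p}\right)$ denotes the Legendre symbol. *)

From HB Require Import structures.
From mathcomp Require Import all_boot all_order all_algebra.
Set Implicit Arguments. Unset Strict Implicit. Unset Printing Implicit Defensive.
Import Order.TTheory GRing.Theory Num.Theory.

Fixpoint dfact (n : nat) : nat :=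
  match n with
  | 0 => 1
  | 1 => 1
  | (m.+2) as k => (k * dfact m)%N
  end.

Definition legendre (a : int) (p : nat) : int :=
  if (p%:Z %| a)%Z then 0%R
  else if [exists x : 'I_p, ((x%:Z) ^+ 2 == a %[mod p%:Z])%Z] then 1%R
  else (-1)%R.

From HB Require Import structures.
From mathcomp Require Import all_boot all_order all_algebra all_field.
From mathcomp Require Import zify ring.
Set Implicit Arguments. Unset Strict Implicit. Unset Printing Implicit Defensive.
Import Order.TTheory GRing.Theory Num.Theory.
Local Open Scope ring_scope.

(* In F_p, with h = (p-1)/2, the squares 1^2, ..., h^2 are the h distinct roots
   of X^h - 1, so t^2 * prod_(s <> t) (t^2 - s^2) = h for each of them.  For a
   fixed row i put u = 2i and let t be whichever of 2i, p - 2i lies in 1..h.  The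
   factors u + j and u - j of the i-th rows of A and B pair up to t^2 - j^2, except
   at j = t, where exactly one of them vanishes and the other is 2u; so i times the
   two rows is h.  As h!! (h-1)!! = h!, this gives A B = h^h, and h = -1/2 gives
   h^h = (-2)^h since (-2)^h = +-1; by Euler's criterion this is (-2/p). *)

Section UnityRootsProduct.

Variables (F : fieldType) (n : nat) (s : seq F).
Hypotheses (s_uniq : uniq s) (size_s : size s = n) (s_unity : all n.-unity_root s).

Lemma prod_XsubC_unity_roots : (0 < n)%N -> \prod_(y <- s) ('X - y%:P) = 'X^n - 1.
Proof.
move=> n_gt0; have := @all_roots_prod_XsubC _ ('X^n - 1) s.
rewrite -polyC1 size_XnsubC // size_s (monicP (monicXnsubC _ n_gt0)) scale1r.
by move=> -> //; rewrite uniq_rootsE.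
Qed.

Lemma mul_prod_sub_unity_roots x :
  x \in s -> x * \prod_(y <- s | y != x) (x - y) = n%:R.
Proof.
move=> s_x; have n_gt0 : (0 < n)%N by rewrite -size_s; case: (s) s_x.
have xn1 : x ^+ n = 1 by apply/unity_rootP; apply: (allP s_unity).
have XnB1 : 'X^n - 1 = ('X - x%:P) * \sum_(k < n) 'X^(n.-1 - k) * x%:P ^+ k.
  by rewrite -subrXX -polyC_exp xn1 polyC1.
have := prod_XsubC_unity_roots n_gt0.
rewrite (bigD1_seq x s_x s_uniq) /= XnB1 => /(mulfI (negbT (polyXsubC_eq0 x))).
move/(congr1 (horner^~ x)); rewrite horner_prod horner_sum /=.
under eq_bigr do rewrite hornerXsubC.
move=> ->; rewrite (eq_bigr (fun=> x ^+ n.-1)) => [|k _].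
  by rewrite sumr_const card_ord mulrnAr -exprS prednK // xn1.
by rewrite hornerM hornerXn -polyC_exp hornerC -exprD subnK // -ltnS prednK.
Qed.

End UnityRootsProduct.

Lemma prod_add_sub_sqr (F : fieldType) (s : seq F) (t u : F) :
  uniq s -> {in s &, injective (fun y => y ^+ 2)} -> t \in s ->
  u ^+ 2 = t ^+ 2 -> 2 * u != 0 ->
  \prod_(y <- s | u + y != 0) (u + y) * \prod_(y <- s | u - y != 0) (u - y)
  = 2 * u * \prod_(y <- s | y ^+ 2 != t ^+ 2) (t ^+ 2 - y ^+ 2).
Proof.
move=> s_uniq sqr_inj s_t u2 u2_neq0.
have diff_sqr y : (u + y) * (u - y) = t ^+ 2 - y ^+ 2 by rewrite -u2; ring.
rewrite !(big_mkcond (fun y => _ != 0)) -big_split /= [in RHS]big_mkcond /=.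
rewrite !(bigD1_seq t s_t s_uniq) /= eqxx mul1r; congr (_ * _).
  have : (u + t) * (u - t) == 0 by rewrite diff_sqr subrr.
  rewrite mulf_eq0 => /orP[] /eqP uBt.
    have -> : u - t = 2 * u by rewrite -[u - t]addr0 -uBt; ring.
    by rewrite uBt eqxx (negbTE u2_neq0) mul1r.
  have -> : u + t = 2 * u by rewrite -[u + t]addr0 -uBt; ring.
  by rewrite uBt eqxx (negbTE u2_neq0) mulr1.
rewrite big_seq_cond [RHS]big_seq_cond; apply: eq_bigr => y /andP[s_y y_neq_t].
have y2 : y ^+ 2 != t ^+ 2 by apply: contra y_neq_t => /eqP/sqr_inj-> //.
rewrite y2 -diff_sqr.
have : (u + y) * (u - y) != 0 by rewrite diff_sqr subr_eq0 eq_sym.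
by rewrite mulf_eq0 negb_or => /andP[/negbTE-> /negbTE->].
Qed.

Lemma dfact_mul_pred n : (dfact n * dfact n.-1)%N = n`!.
Proof.
case: n => // n; elim: n => // n IHn.
have -> : dfact n.+2 = (n.+2 * dfact n)%N by [].
by rewrite factS -IHn /=; ring.
Qed.

Section HalfSystem.

Variable p : nat.
Hypotheses (p_pr : prime p) (p_gt3 : (3 < p)%N).

Local Notation h := ((p - 1) %/ 2)%N.

Lemma prime_half_double : p = h.*2.+1.
Proof.
have [p2|p_odd] := even_prime p_pr; first by move: p_gt3; rewrite p2.
have : (p %% 2 = 1)%N by rewrite modn2 p_odd.
lia.
Qed.

Lemma natr_Fp_neq0 n : (0 < n < p)%N -> (n%:R : 'F_p) != 0.
Proof. by case/andP=> n_gt0 n_lt_p; rewrite -(dvdn_pcharf (pchar_Fp p_pr)) gtnNdvd. Qed.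

Lemma eqz_mod_Fp (a b : int) : (a == b %[mod p])%Z = (a%:~R == b%:~R :> 'F_p).
Proof. by rewrite eqz_mod_dvd (dvdz_pcharf (pchar_Fp p_pr)) rmorphB subr_eq0. Qed.

Lemma sqr_expr_half_eq1 (a : 'F_p) : a != 0 -> (a ^+ 2) ^+ h = 1.
Proof.
move=> a_neq0; rewrite -exprM.
have -> : (2 * h)%N = p.-1 by have := prime_half_double; lia.
apply: (mulIf a_neq0); rewrite mul1r -exprSr prednK ?prime_gt0 //.
by have := expf_card a; rewrite card_Fp.
Qed.

Definition half_system : seq 'F_p := [seq j%:R | j <- index_iota 1 h.+1].

Definition half_squares : seq 'F_p := [seq y ^+ 2 | y <- half_system].

Lemma half_system_uniq : uniq half_system.
Proof.
rewrite map_inj_in_uniq ?iota_uniq // => j k.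
rewrite !mem_index_iota => j_range k_range.
move/(congr1 val); rewrite /= !val_Fp_nat // !modn_small //.
all: by have := prime_half_double; lia.
Qed.

Lemma sqr_half_system_inj : {in half_system &, injective (fun y => y ^+ 2)}.
Proof.
move=> _ _ /mapP[j + ->] /mapP[k + ->]; rewrite !mem_index_iota => j_range k_range.
have jk_neq0 : ((j + k)%:R : 'F_p) != 0.
  by rewrite natr_Fp_neq0 //; have := prime_half_double; lia.
move/eqP; rewrite -subr_eq0 subr_sqr mulf_eq0 -natrD (negbTE jk_neq0) orbF.
by rewrite subr_eq0 => /eqP.
Qed.

Lemma half_squares_uniq : uniq half_squares.
Proof. by rewrite map_inj_in_uniq ?half_system_uniq //; apply: sqr_half_system_inj. Qed.

Lemma size_half_squares : size half_squares = h.
Proof. by rewrite !size_map size_iota subn1. Qed.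

Lemma half_squares_unity : all h.-unity_root half_squares.
Proof.
apply/allP => _ /mapP[_ /mapP[j + ->] ->]; rewrite mem_index_iota => j_range.
rewrite unity_rootE sqr_expr_half_eq1 // natr_Fp_neq0 //.
by have := prime_half_double; lia.
Qed.

Lemma legendre_euler (a : int) :
  ~~ (p%:Z %| a)%Z -> (legendre a p)%:~R = (a%:~R : 'F_p) ^+ h.
Proof.
rewrite /legendre (dvdz_pcharf (pchar_Fp p_pr)) => a_neq0; rewrite (negbTE a_neq0).
case: existsP => [[y]|no_sqrt].
  rewrite eqz_mod_Fp rmorphXn rmorph1 /= => /eqP y2a; rewrite -y2a sqr_expr_half_eq1 //.
  by apply: contraNneq a_neq0 => y0; rewrite -y2a y0 expr0n.
have : ((a%:~R : 'F_p) ^+ h == 1) || ((a%:~R : 'F_p) ^+ h == -1).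
  by rewrite -sqrf_eq1 exprAC sqr_expr_half_eq1.
case/orP=> /eqP ah1; last by rewrite ah1.
have : a%:~R \in half_squares.
  rewrite -(mem_unity_roots _ half_squares_unity half_squares_uniq size_half_squares).
    by apply/unity_rootP.
  by have := prime_half_double; lia.
case/mapP => _ /mapP[j + ->] aj; rewrite mem_index_iota => j_range.
have j_lt_p : (j < p)%N by have := prime_half_double; lia.
by case: no_sqrt; exists (Ordinal j_lt_p); rewrite eqz_mod_Fp rmorphXn /= aj.
Qed.

Lemma half_expr_legendreN2 : (h%:R : 'F_p) ^+ h = (legendre (-2) p)%:~R.
Proof.
have hp := prime_half_double.
have two_neq0 : (-2 : 'F_p) != 0 by rewrite oppr_eq0 natr_Fp_neq0 //; lia.
have h_inv : (h%:R : 'F_p) * -2 = 1.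
  have : ((h.*2.+1)%:R : 'F_p) = 0 by rewrite -hp; apply: pchar_Fp_0.
  rewrite -natr1 -mul2n natrM => p0.
  by rewrite -[RHS]subr0 -p0; ring.
rewrite legendre_euler; last by rewrite (dvdz_pcharf (pchar_Fp p_pr)).
have e2 : ((-2 : 'F_p) ^+ h) ^+ 2 = 1 by rewrite exprAC sqr_expr_half_eq1.
have -> : (h%:R : 'F_p) ^+ h = (h%:R ^+ h * (-2) ^+ h) * (-2) ^+ h.
  by rewrite -mulrA -expr2 e2 mulr1.
by rewrite -exprMn h_inv expr1n mul1r.
Qed.

Lemma half_row_prod i : (0 < i <= h)%N ->
  i%:R * (\prod_(1 <= j < h.+1 | (2 * i)%:R + j%:R != 0 :> 'F_p) ((2 * i)%:R + j%:R)
        * \prod_(1 <= j < h.+1 | (2 * i)%:R - j%:R != 0 :> 'F_p) ((2 * i)%:R - j%:R))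
  = h%:R :> 'F_p.
Proof.
move=> i_range; have hp := prime_half_double.
set u : 'F_p := (2 * i)%:R.
pose t : 'F_p := if (2 * i <= h)%N then u else (p - 2 * i)%N%:R.
have half_t : t \in half_system.
  rewrite /t /u; case: leqP => i_big; apply: map_f; rewrite mem_index_iota; lia.
have u2 : u ^+ 2 = t ^+ 2.
  rewrite /t; case: leqP => // _; rewrite natrB ?pchar_Fp_0 ?sub0r ?sqrrN //; lia.
have u2_neq0 : 2 * u != 0 by rewrite mulf_neq0 // natr_Fp_neq0 //; lia.
rewrite -(big_map _ (fun y => u + y != 0) (fun y => u + y)).
rewrite -(big_map _ (fun y => u - y != 0) (fun y => u - y)) -/half_system.
rewrite (prod_add_sub_sqr half_system_uniq sqr_half_system_inj half_t u2 u2_neq0) mulrA.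
have -> : i%:R * (2 * u) = t ^+ 2 by rewrite -u2 /u natrM; ring.
rewrite -(big_map (fun y => y ^+ 2) (fun z => z != t ^+ 2) (fun z => t ^+ 2 - z)).
apply: (mul_prod_sub_unity_roots half_squares_uniq size_half_squares).
  exact: half_squares_unity.
exact: map_f.
Qed.

Lemma prod_half_rows :
  ((dfact h)%:R * \prod_(1 <= i < h.+1)
      \prod_(1 <= j < h.+1 | (2 * i)%:R + j%:R != 0 :> 'F_p) ((2 * i)%:R + j%:R)) *
  ((dfact h.-1)%:R * \prod_(1 <= i < h.+1)
      \prod_(1 <= j < h.+1 | (2 * i)%:R - j%:R != 0 :> 'F_p) ((2 * i)%:R - j%:R))
  = (legendre (-2) p)%:~R :> 'F_p.
Proof.
rewrite mulrACA -natrM dfact_mul_pred fact_prod natr_prod -!big_split /= big_seq.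
rewrite (eq_bigr (fun=> h%:R)) => [|i]; last by rewrite mem_index_iota => /half_row_prod.
by rewrite -big_seq prodr_const_nat subSS subn0 half_expr_legendreN2.
Qed.

End HalfSystem.

Local Close Scope ring_scope.

Theorem mainTheorem11 (p : nat) (hp : prime p) (hp3 : (3 < p)%N) :
  let h := ((p - 1) %/ 2)%N in
  let A : int := ((dfact ((p - 1) %/ 2))%:Z *
      \prod_(1 <= i < h.+1) \prod_(1 <= j < h.+1 | ~~ (p %| 2 * i + j)%N)
          ((2 * i + j)%N)%:Z)%R in
  let B : int := ((dfact ((p - 3) %/ 2))%:Z *
      \prod_(1 <= i < h.+1) \prod_(1 <= j < h.+1 | ~~ (p%:Z %| (2 * i)%:Z - j%:Z)%Z)
          ((2 * i)%:Z - j%:Z))%R in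
  (A * B == legendre (-2) p %[mod p%:Z])%Z.
Proof.
cbv zeta; have pred_h : (p - 3) %/ 2 = ((p - 1) %/ 2).-1 by lia.
rewrite eqz_mod_Fp // -(prod_half_rows hp hp3) pred_h !rmorphM !rmorph_prod.
apply/eqP; congr (_ * _ * (_ * _))%R; apply: eq_bigr => i _; rewrite rmorph_prod.
  apply: eq_big => [j|j _]; first by rewrite (dvdn_pcharf (pchar_Fp hp)) natrD.
  by rewrite -natz rmorph_nat natrD.
apply: eq_big => [j|j _]; first by rewrite (dvdz_pcharf (pchar_Fp hp)) rmorphB.
by rewrite rmorphB -!natz !rmorph_nat.
Qed.
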